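(* Assume the setting in the context (in particular Assumption (A)). Let $\rho>0$, $z_0\in V_f(\rho)$ and $\epsilon>0$, run Algorithm $\mathcal{A}_*$ from $z_0$ with accuracy $\epsilon$, and suppose $j_{out}\geq2$. Suppose that there exist an integer $T\in\{2,\dots,j_{out}\}$ and an integer $\ell\in\{0,\dots,j_{out}-T\}$ such that $m_{\ell+1}>\frac{1}{\sqrt{15}}m_{\ell+1+T}$. Then: (i) $s_j\in\left(0,\frac{\sqrt{15}}{4}\right]$ for all $j\in\{\ell+2,\dots,\ell+T\}$; (ii) $\sum_{j=\ell+2}^{\ell+T}\ln\left(\max\{1,(4s_j)^4\}\right)<4\ln15$; (iii) $\sum_{j=\ell+2}^{\ell+T}\ln\left(\frac{1}{s_j^2}-1\right)\leq\ln\left(1+\frac{f(z_0)-f^*}{\epsilon}\right)$; (iv) $T<5+\frac{1}{\ln15}\ln\left(1+\frac{f(z_0)-f^*}{\epsilon}\right)$.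
   Context: Let $f:\mathbb{R}^n\to(-\infty,\infty]$ be a proper closed convex function such that the problem $f^*=\min_{x\in\mathbb{R}^n}f(x)$ is solvable. Let $\Omega_f=\{x: f(x)=f^*\}$, fix a norm $\|\cdot\|$ on $\mathbb{R}^n$ with dual norm $\|y\|_*=\sup\{y^Tz:\|z\|\leq 1\}$, and for $x\in\mathbb{R}^n$ let $\bar x=\arg\min_{z\in\Omega_f}\|x-z\|$. For $\rho\geq0$ let $V_f(\rho)=\{x: f(x)-f^*\leq\rho\}$. Let $\mathcal{A}$ be an iterative algorithm: for $x_0\in\mathrm{dom} f$ and integer $k\geq1$, $\mathcal{A}(x_0,k)$ denotes its $k$-th iterate started from $x_0$ (and $\mathcal{A}(x_0,0)=x_0$). Assumption (A): (i) for every $\rho>0$ there is $\mu_\rho>0$ with $f(x_0)-f^*\geq\frac{\mu_\rho}{2}\|x_0-\bar x_0\|^2$ for all $x_0\in V_f(\rho)$; (ii) there exist $a_f>0$, $L_f>0$ and $g:\mathbb{R}^n\to\mathbb{R}^n$ with $g(x)=0\iff x\in\Omega_f$ such that for every $x_0\in\mathrm{dom} f$: $f(\mathcal{A}(x_0,1))\leq f(x_0)-\frac{1}{2L_f}\|g(x_0)\|_*^2$ and $f(\mathcal{A}(x_0,k))-f^*\leq\frac{a_f}{(k+1)^2}\|x_0-\bar x_0\|^2$ for all $k\geq1$; (iii) $\bar n_\rho:=\max\{\frac12,\sqrt{2a_f/\mu_\rho}\}$. Procedure $\mathcal{A}_d(r,n)$ (input $r\in\mathrm{dom} f$, $n\in\mathbb{R}$):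 set $x_0=r$, $k=0$. Repeat: $k\gets k+1$; set $x_k=\mathcal{A}(x_0,k)$ if $f(\mathcal{A}(x_0,k))\leq f(x_{k-1})$, and $x_k=x_{k-1}$ otherwise; $\ell=\lfloor k/2\rfloor$; until $k\geq n$ and $f(x_\ell)-f(x_k)\leq\frac13(f(x_0)-f(x_\ell))$. Output $z=x_k$, $m=k$. Algorithm $\mathcal{A}_*(z_0)$ (input $z_0\in\mathrm{dom} f$, $\epsilon>0$): set $m_0=1$, $m_{-1}=1$, $j=-1$. Repeat: $j\gets j+1$; $s_j=\sqrt{\frac{f(z_{j-1})-f(z_j)}{f(z_{j-2})-f(z_j)}}$ if $j\geq2$ and $s_j=0$ otherwise; $n_j=\max\{m_j,4s_jm_{j-1}\}$; $[z_{j+1},m_{j+1}]=\mathcal{A}_d(z_j,n_j)$; until $f(z_j)-f(z_{j+1})\leq\epsilon$. Output $z_{out}=z_{j+1}$, $j_{out}=j$. *)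

From mathcomp Require Import all_boot all_order all_algebra.
From mathcomp Require Import all_classical all_reals all_analysis.
Set Implicit Arguments. Unset Strict Implicit. Unset Printing Implicit Defensive.
Import Order.TTheory GRing.Theory Num.Theory.
Local Open Scope classical_set_scope.
Local Open Scope ring_scope.

Section Defs.
Variables (R : realType) (n : nat).
Notation vec := 'rV[R]_n.

Definition is_norm (N : vec -> R) : Prop :=
  [/\ forall x, N x = 0 -> x = 0,
      forall (a : R) x, N (a *: x) = `|a| * N x &
      forall x y, N (x + y) <= N x + N y].

Definition dotv (y z : vec) : R := \sum_(i < n) y ord0 i * z ord0 i.

Definition dual_norm (N : vec -> R) (y : vec) : R :=
  sup [set dotv y z | z in [set z : vec | N z <= 1]].

Definition proper_fun (f : vec -> \bar R) : Prop :=
  (forall x, f x <> -oo%E) /\ exists x, f x <> +oo%E.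

(* closed = lower semicontinuous (closed epigraph) *)
Definition closed_fun (N : vec -> R) (f : vec -> \bar R) : Prop :=
  forall (x : vec) (a : R), (a%:E < f x)%E ->
    exists2 d : R, 0 < d & forall y, N (y - x) < d -> (a%:E < f y)%E.

Definition convex_fun (f : vec -> \bar R) : Prop :=
  forall (x y : vec) (t : R), 0 < t < 1 ->
    (f (t *: x + (1 - t) *: y)%R <= t%:E * f x + (1 - t)%:E * f y)%E.

Definition is_min_value (f : vec -> \bar R) (fs : R) : Prop :=
  (exists x, f x = fs%:E) /\ forall x, (fs%:E <= f x)%E.

Definition argmin_set (f : vec -> \bar R) (fs : R) : set vec :=
  [set x | f x = fs%:E].

Definition is_proj (N : vec -> R) (Om : set vec) (xbar : vec -> vec) : Prop :=
  forall x, Om (xbar x) /\ forall z, Om z -> N (x - xbar x) <= N (x - z).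

Definition sublevel (f : vec -> \bar R) (fs rho : R) : set vec :=
  [set x | (f x <= (fs + rho)%:E)%E].

(* Assumption (A) (i)-(ii); (iii) only defines nbar_rho and is not needed. *)
Definition assumptionA (N : vec -> R) (f : vec -> \bar R) (fs : R)
    (xbar : vec -> vec) (A : vec -> nat -> vec) : Prop :=
  (forall rho : R, 0 < rho -> exists2 mu : R, 0 < mu &
     forall x0, sublevel f fs rho x0 ->
       ((fs + mu / 2 * N (x0 - xbar x0) ^+ 2)%:E <= f x0)%E) /\
  (exists (af Lf : R) (g : vec -> vec),
     [/\ 0 < af, 0 < Lf,
         (forall x, g x = 0 <-> argmin_set f fs x) &
         forall x0, f x0 <> +oo%E ->
           (f (A x0 1%N) <= f x0 - (dual_norm N (g x0) ^+ 2 / (2 * Lf))%:E)%E /\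
           (forall k : nat, (1 <= k)%N ->
              (f (A x0 k) <= (fs + af / ((k.+1)%:R ^+ 2) * N (x0 - xbar x0) ^+ 2)%:E)%E)]).

Fixpoint Ad_seq (f : vec -> \bar R) (A : vec -> nat -> vec) (r : vec) (k : nat)
  : vec :=
  match k with
  | 0 => r
  | k'.+1 => if (f (A r k'.+1) <= f (Ad_seq f A r k'))%E then A r k'.+1
             else Ad_seq f A r k'
  end.

(* the "until" test of A_d at counter value k (all values are finite since
   r \in dom f and the iterates are monotone, so [fine] is harmless) *)
Definition Ad_stop (f : vec -> \bar R) (A : vec -> nat -> vec) (r : vec)
    (nn : R) (k : nat) : Prop :=
  let x := Ad_seq f A r in
  let l := k./2 in
  [/\ (1 <= k)%N, nn <= k%:R &
      fine (f (x l)) - fine (f (x k)) <= (fine (f (x 0%N)) - fine (f (x l))) / 3].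

Definition Ad_out (f : vec -> \bar R) (A : vec -> nat -> vec) (r : vec)
    (nn : R) (z : vec) (m : nat) : Prop :=
  [/\ Ad_stop f A r nn m,
      (forall k, (k < m)%N -> ~ Ad_stop f A r nn k) &
      z = Ad_seq f A r m].

(* quantities of A_* built from the sequences z_j, m_j (j >= 0);
   m_{-1} = 1 = m_0, so m (j.-1) correctly represents m_{j-1} for all j *)
Definition s_coef (f : vec -> \bar R) (z : nat -> vec) (j : nat) : R :=
  if (2 <= j)%N then
    Num.sqrt ((fine (f (z j.-1)) - fine (f (z j))) /
              (fine (f (z j.-2)) - fine (f (z j))))
  else 0.

Definition n_coef (f : vec -> \bar R) (z : nat -> vec) (m : nat -> nat) (j : nat)
  : R := Num.max (m j)%:R (4 * s_coef f z j * (m j.-1)%:R).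

Definition Astar_run (f : vec -> \bar R) (A : vec -> nat -> vec) (eps : R)
    (z0 : vec) (z : nat -> vec) (m : nat -> nat) (J : nat) : Prop :=
  [/\ z 0%N = z0, m 0%N = 1%N,
      (forall j, (j <= J)%N ->
          Ad_out f A (z j) (n_coef f z m j) (z j.+1) (m j.+1)),
      (forall j, (j < J)%N -> eps < fine (f (z j)) - fine (f (z j.+1))) &
      fine (f (z J)) - fine (f (z J.+1)) <= eps].

End Defs.

From mathcomp Require Import all_boot all_order all_algebra.
From mathcomp Require Import all_classical all_reals all_analysis.
From mathcomp Require Import ring lra zify.

(* Along a run of A_*, every gap [f(z_(j-1)) - f(z_j)] exceeds [eps], the counters
   [m_j] are nondecreasing and [m_(j+1) >= 4 s_j m_(j-1)].  On a window where [m]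
   grows by a factor less than [sqrt 15], the factors [4 s_j] telescope into
   [(m_(l+T+1) / m_(l+1))^2 < 15], which gives (i) and (ii).  Since [1/s_j^2 - 1]
   is the ratio of two consecutive gaps, the sum (iii) telescopes to the log of
   [gap_(l+1) / gap_(l+T) <= (f(z_0) - fs) / eps].  Finally every [s] in
   [(0, sqrt 15 / 4]] satisfies [(1/s^2 - 1) max(1, (4s)^4) >= 15], so adding
   (ii) and (iii) bounds [(T - 1) ln 15], which is (iv). *)

Set Implicit Arguments.
Unset Strict Implicit.
Unset Printing Implicit Defensive.
Import Order.TTheory GRing.Theory Num.Theory.
Local Open Scope ring_scope.

Section RealFacts.
Variable R : realType.
Implicit Types s x y a b c d e : R.

Lemma ln_max1_expr4_le s x y : 0 < s -> 0 < x -> x <= y -> 4 * s * x <= y ->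
  ln (Num.max 1 ((4 * s) ^+ 4)) <= 4 * (ln y - ln x).
Proof.
move=> s_gt0 x_gt0 le_xy le_sxy; have y_gt0 : 0 < y by apply: lt_le_trans le_xy.
have ln_xy : ln x <= ln y by rewrite ler_ln ?posrE.
have [small|big] := lerP ((4 * s) ^+ 4) 1; first by rewrite ln1; lra.
have ln_s : ln (4 * s) <= ln y - ln x.
  by rewrite -ln_div ?posrE // ler_ln ?posrE ?divr_gt0 ?mulr_gt0 // ler_pdivlMr.
rewrite lnXn ?mulr_gt0 // -[ln _ *+ 4]mulr_natl; lra.
Qed.

Lemma ln_odds_ratio a b c : c < b < a ->
  ln (1 / ((b - c) / (a - c)) - 1) = ln (a - b) - ln (b - c).
Proof.
move=> /andP[lt_cb lt_ba].
have -> : 1 / ((b - c) / (a - c)) - 1 = (a - b) / (b - c).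
  by field; rewrite !subr_eq0 !gt_eqF // (lt_trans lt_cb lt_ba).
by rewrite ln_div ?posrE ?subr_gt0.
Qed.

(* For [u = s^2 <= 1/16] the odds [1/u - 1] alone reach 15; above that,
   [256 u (1 - u) >= 15] on [1/16, 15/16]. *)
Lemma ln15_le_ln_odds_add_ln_max s : 0 < s -> s <= Num.sqrt 15 / 4 ->
  ln 15 <= ln (1 / s ^+ 2 - 1) + ln (Num.max 1 ((4 * s) ^+ 4)).
Proof.
move=> s_gt0 s_le; set u := s ^+ 2.
have u_gt0 : 0 < u by rewrite exprn_gt0.
have u_le : u <= 15 / 16.
  have -> : 15 / 16 = (Num.sqrt 15 / 4) ^+ 2 :> R.
    by rewrite expr_div_n sqr_sqrtr //; field.
  by rewrite /u !expr2 ler_pM // ltW.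
have odds_E : 1 / u - 1 = (1 - u) / u by field; rewrite gt_eqF.
have odds_gt0 : 0 < (1 - u) / u by rewrite divr_gt0 //; lra.
have pow_E : (4 * s) ^+ 4 = 256 * u ^+ 2 by rewrite /u; ring.
rewrite odds_E pow_E; have [small|big] := lerP (256 * u ^+ 2) 1.
  rewrite ln1 addr0 ler_ln ?posrE // ler_pdivlMr //; nra.
have pow_gt0 : 0 < 256 * u ^+ 2 by rewrite mulr_gt0 ?exprn_gt0.
rewrite -lnM ?posrE // ler_ln ?posrE ?(mulr_gt0 odds_gt0 pow_gt0) //.
have -> : (1 - u) / u * (256 * u ^+ 2) = 256 * u * (1 - u) by field; rewrite gt_eqF.
nra.
Qed.

Lemma telescope2_sumr (v : nat -> R) p q : (p <= q)%N ->
  \sum_(p <= j < q) (v j.+1 - v j.-1) = v q + v q.-1 - v p - v p.-1.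
Proof.
move=> le_pq.
have split_term j : v j.+1 - v j.-1 = (v j.+1 - v j) + (v j - v j.-1) :> R.
  by rewrite addrA subrK.
rewrite (eq_bigr _ (fun j _ => split_term j)) big_split /= telescope_sumr //.
by rewrite (telescope_sumr (fun j => v j.-1)) //; ring.
Qed.

Lemma ln_sub_ln_le x y c e : 0 < x <= c -> 0 < e < y -> ln x - ln y <= ln (1 + c / e).
Proof.
move=> /andP[x_gt0 le_xc] /andP[e_gt0 lt_ey]; have y_gt0 : 0 < y by apply: lt_trans lt_ey.
have c_gt0 : 0 < c by apply: lt_le_trans le_xc.
have le_ratio : x / y <= c / e.
  by apply: ler_pM; rewrite ?invr_ge0 ?(ltW x_gt0) ?(ltW y_gt0) // lef_pV2 ?posrE ?(ltW lt_ey).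
rewrite -ln_div ?posrE // ler_ln ?posrE ?addr_gt0 ?divr_gt0 //; lra.
Qed.

Lemma fin_num_sandwich c d (x : \bar R) : (c%:E <= x <= d%:E)%E -> x \is a fin_num.
Proof. by case: x => [r| |] // /andP[]. Qed.

End RealFacts.

Section AstarRun.
Variables (R : realType) (n : nat) (f : 'rV[R]_n -> \bar R).
Variable A : 'rV[R]_n -> nat -> 'rV[R]_n.

Lemma Ad_seq_le r k : (f (Ad_seq f A r k) <= f r)%E.
Proof.
elim: k => [|k IHk] //=.
by case: ifP => [le_next|_] //; apply: le_trans le_next IHk.
Qed.

Variables (eps : R) (z0 : 'rV[R]_n) (z : nat -> 'rV[R]_n) (m : nat -> nat) (J : nat).
Hypotheses (eps_gt0 : 0 < eps) (run : Astar_run f A eps z0 z m J).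

Local Notation s := (s_coef f z).
Local Notation a j := (fine (f (z j))).

Lemma Astar_run_n_coef_le j : (j <= J)%N -> n_coef f z m j <= (m j.+1)%:R.
Proof. by case: run => _ _ out _ _ /out [[_ + _] _ _]. Qed.

Lemma Astar_run_m_succ j : (j <= J)%N -> (m j <= m j.+1)%N.
Proof. by move/Astar_run_n_coef_le; rewrite ge_max ler_nat => /andP[]. Qed.

Lemma Astar_run_s_m_le j : (j <= J)%N -> 4 * s j * (m j.-1)%:R <= (m j.+1)%:R.
Proof. by move/Astar_run_n_coef_le; rewrite ge_max => /andP[]. Qed.

Lemma Astar_run_m_homo i k : (i <= k <= J.+1)%N -> (m i <= m k)%N.
Proof.
elim: k => [|k IHk] /andP[]; first by rewrite leqn0 => /eqP->.
rewrite leq_eqVlt => /orP[/eqP-> // | lt_ik lt_kJ].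
apply: leq_trans (IHk _) (Astar_run_m_succ lt_kJ).
by rewrite -ltnS lt_ik (ltnW lt_kJ).
Qed.

Lemma Astar_run_m_gt0 j : (j <= J.+1)%N -> (0 < m j)%N.
Proof.
case: run => _ m0 _ _ _ le_jJ.
by rewrite -m0 Astar_run_m_homo // le_jJ.
Qed.

Lemma Astar_run_f_le j : (j <= J.+1)%N -> (f (z j) <= f z0)%E.
Proof.
case: run => z_0 _ out _ _; elim: j => [|j IHj] le_jJ; first by rewrite z_0.
have [_ _ ->] := out j le_jJ.
exact: le_trans (Ad_seq_le _ _) (IHj (ltnW le_jJ)).
Qed.

Lemma Astar_run_decrease j : (j < J)%N -> eps < a j - a j.+1.
Proof. by case: run => _ _ _ + _; apply. Qed.

Lemma Astar_run_gap_gt0 j : (j < J)%N -> 0 < a j - a j.+1.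
Proof. by move/Astar_run_decrease; apply: lt_trans. Qed.

Lemma Astar_run_s_sqr k : (k.+2 <= J)%N ->
  0 < s k.+2 /\ s k.+2 ^+ 2 = (a k.+1 - a k.+2) / (a k - a k.+2).
Proof.
move=> le_kJ; have d0 := @Astar_run_gap_gt0 k (ltnW le_kJ).
have d1 := @Astar_run_gap_gt0 k.+1 le_kJ.
have ratio_gt0 : 0 < (a k.+1 - a k.+2) / (a k - a k.+2) by apply: divr_gt0; lra.
by rewrite /s_coef /= sqrtr_gt0 sqr_sqrtr ?ltW.
Qed.

Lemma Astar_run_ln_odds k : (k.+2 <= J)%N ->
  ln (1 / s k.+2 ^+ 2 - 1) = ln (a k - a k.+1) - ln (a k.+1 - a k.+2).
Proof.
move=> le_kJ; have d0 := @Astar_run_gap_gt0 k (ltnW le_kJ).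
have d1 := @Astar_run_gap_gt0 k.+1 le_kJ.
by rewrite (Astar_run_s_sqr le_kJ).2 ln_odds_ratio //; apply/andP; split; lra.
Qed.

Variables (fs rho : R).
Hypotheses (fs_min : forall x, (fs%:E <= f x)%E) (z0_sub : sublevel f fs rho z0).

Lemma Astar_run_fine_bounds j : (j <= J.+1)%N -> fs <= a j <= fine (f z0).
Proof.
move=> le_jJ; have le_fz := Astar_run_f_le le_jJ.
have z0_fin : f z0 \is a fin_num.
  by apply: (@fin_num_sandwich _ fs (fs + rho)); rewrite fs_min z0_sub.
have zj_fin : f (z j) \is a fin_num.
  by apply: (@fin_num_sandwich _ fs (fs + rho)); rewrite fs_min (le_trans le_fz z0_sub).
by rewrite -[fs]/(fine fs%:E) !fine_le.
Qed.

Section Window.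
Variables l T : nat.
Hypotheses (T_ge2 : (2 <= T)%N) (le_lTJ : (l + T <= J)%N).

Lemma window_sum_ln_odds_le :
  \sum_(l.+2 <= j < (l + T).+1) ln (1 / s j ^+ 2 - 1) <= ln (1 + (fine (f z0) - fs) / eps).
Proof.
pose d i := ln (a i - a i.+1).
have term j : (l.+2 <= j < (l + T).+1)%N -> ln (1 / s j ^+ 2 - 1) = d j.-2 - d j.-1.
  by case: j => [|[|k]] /andP[le_lj le_jl]; [lia | lia | apply: Astar_run_ln_odds; lia].
have tel : \sum_(l.+2 <= j < (l + T).+1) (d j.-2 - d j.-1) = d l - d (l + T).-1.
  rewrite -[LHS]opprK -sumrN; under eq_bigr do rewrite opprB.
  by rewrite (telescope_sumr (fun j => d j.-2)) ?opprB //; lia.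
rewrite (eq_big_nat _ _ term) tel /d prednK; last lia.
apply: ln_sub_ln_le; apply/andP; split.
- by apply: Astar_run_gap_gt0; lia.
- have /andP[_ al_le] := @Astar_run_fine_bounds l ltac:(lia).
  have /andP[al1_ge _] := @Astar_run_fine_bounds l.+1 ltac:(lia).
  lra.
- exact: eps_gt0.
- by have := @Astar_run_decrease (l + T).-1 ltac:(lia); rewrite prednK //; lia.
Qed.

Hypothesis window : (m (l + T).+1)%:R < (m l.+1)%:R * Num.sqrt (15 : R).

Lemma window_s_bound j : (l.+2 <= j <= l + T)%N -> 0 < s j <= Num.sqrt 15 / 4.
Proof.
case: j => [|[|k]] /andP[le_lj le_jl]; try lia.
have [s_gt0 _] := @Astar_run_s_sqr k ltac:(lia).
have m_gt0 : 0 < (m l.+1)%:R :> R by rewrite ltr0n Astar_run_m_gt0 //; lia.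
have m_lk : (m l.+1)%:R <= (m k.+1)%:R :> R by rewrite ler_nat Astar_run_m_homo //; lia.
have m_kT : (m k.+3)%:R <= (m (l + T).+1)%:R :> R by rewrite ler_nat Astar_run_m_homo //; lia.
have s_m : 4 * s k.+2 * (m k.+1)%:R <= (m k.+3)%:R by apply: Astar_run_s_m_le; lia.
have s_m_lk : 4 * s k.+2 * (m l.+1)%:R <= 4 * s k.+2 * (m k.+1)%:R.
  by apply: ler_wpM2l => //; rewrite mulr_ge0 // ltW.
rewrite s_gt0 ler_pdivlMr // -(ler_pM2r m_gt0); have := window; lra.
Qed.

Lemma window_sum_ln_max_lt :
  \sum_(l.+2 <= j < (l + T).+1) ln (Num.max 1 ((4 * s j) ^+ 4)) < 4 * ln 15.
Proof.
pose L i := ln ((m i)%:R : R).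
have L_homo i k : (i <= k <= J.+1)%N -> L i <= L k.
  move=> /andP[le_ik le_kJ]; have le_iJ := leq_trans le_ik le_kJ.
  by rewrite ler_ln ?posrE ?ltr0n ?Astar_run_m_gt0 // ler_nat Astar_run_m_homo // le_ik.
have term j : (l.+2 <= j < (l + T).+1)%N ->
    ln (Num.max 1 ((4 * s j) ^+ 4)) <= 4 * (L j.+1 - L j.-1).
  case: j => [|[|k]] /andP[le_lj le_jl]; try lia.
  apply: ln_max1_expr4_le.
  - exact: (@Astar_run_s_sqr k ltac:(lia)).1.
  - by rewrite ltr0n Astar_run_m_gt0 //; lia.
  - by rewrite ler_nat Astar_run_m_homo //; lia.
  - by apply: Astar_run_s_m_le; lia.
have ln_sqrt15 : 2 * ln (Num.sqrt 15 : R) = ln 15.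
  by rewrite -[2]/(2%:R) mulr_natl -lnXn ?sqr_sqrtr ?sqrtr_gt0.
have ln_window : L (l + T).+1 < L l.+1 + ln (Num.sqrt 15).
  rewrite -lnM ?posrE ?sqrtr_gt0 ?ltr0n ?Astar_run_m_gt0 //; last lia.
  by rewrite ltr_ln ?posrE ?mulr_gt0 ?sqrtr_gt0 ?ltr0n ?Astar_run_m_gt0 //; lia.
apply: le_lt_trans (ler_sum_nat term) _.
rewrite -mulr_sumr telescope2_sumr /=; last lia.
have := L_homo l.+1 l.+2 ltac:(lia); have := L_homo (l + T) (l + T).+1 ltac:(lia).
lra.
Qed.

Lemma window_length_lt : T%:R < 5 + ln (1 + (fine (f z0) - fs) / eps) / ln 15.
Proof.
set B := ln (1 + _ / _).
have ln15_gt0 : 0 < ln (15 : R) by rewrite ln_gt0 // ltr1n.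
have term j : (l.+2 <= j < (l + T).+1)%N ->
    ln 15 <= ln (1 / s j ^+ 2 - 1) + ln (Num.max 1 ((4 * s j) ^+ 4)).
  move=> /andP[le_lj lt_jl]; have /andP[s_gt0 s_le] := @window_s_bound j ltac:(lia).
  exact: ln15_le_ln_odds_add_ln_max.
have := ler_sum_nat term; rewrite big_split /= sumr_const_nat -[ln _ *+ _]mulr_natl.
have -> : ((l + T).+1 - l.+2 = T - 1)%N by lia.
rewrite natrB; last lia.
have := window_sum_ln_max_lt; have := window_sum_ln_odds_le; rewrite -/B => S3 S2 S.
rewrite -(ltr_pM2r ln15_gt0) mulrDl divfK ?gt_eqF //; nra.
Qed.

End Window.

End AstarRun.

Theorem lemma3 (R : realType) (n : nat) (N : 'rV[R]_n -> R)
  (f : 'rV[R]_n -> \bar R) (fs : R) (xbar : 'rV[R]_n -> 'rV[R]_n)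
  (A : 'rV[R]_n -> nat -> 'rV[R]_n) :
  is_norm N -> proper_fun f -> closed_fun N f -> convex_fun f ->
  is_min_value f fs -> is_proj N (argmin_set f fs) xbar ->
  (forall x, A x 0%N = x) ->
  assumptionA N f fs xbar A ->
  forall (rho : R) (z0 : 'rV[R]_n) (eps : R),
  0 < rho -> sublevel f fs rho z0 -> 0 < eps ->
  forall (z : nat -> 'rV[R]_n) (m : nat -> nat) (jout : nat),
  Astar_run f A eps z0 z m jout -> (2 <= jout)%N ->
  forall T l : nat, (2 <= T <= jout)%N -> (l <= jout - T)%N ->
  (m (l + 1 + T)%N)%:R / Num.sqrt (15 : R) < (m (l + 1)%N)%:R ->
  let s := s_coef f z in
  [/\ (forall j : nat, (l + 2 <= j <= l + T)%N -> 0 < s j <= Num.sqrt (15 : R) / 4),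
      \sum_(l + 2 <= j < (l + T).+1) ln (Num.max 1 ((4 * s j) ^+ 4)) < 4 * ln (15 : R),
      \sum_(l + 2 <= j < (l + T).+1) ln (1 / (s j) ^+ 2 - 1)
         <= ln (1 + (fine (f z0) - fs) / eps) &
      T%:R < 5 + ln (1 + (fine (f z0) - fs) / eps) / ln (15 : R)].
Proof.
move=> _ _ _ _ [_ fs_min] _ _ _ rho z0 eps _ z0_sub eps_gt0 z m J run _ T l.
move=> /andP[T_ge2 le_TJ] le_lJT window s.
have le_lTJ : (l + T <= J)%N by lia.
have {}window : (m (l + T).+1)%:R < (m l.+1)%:R * Num.sqrt (15 : R).
  by move: window; rewrite addn1 addSn ltr_pdivrMr ?sqrtr_gt0.
rewrite addn2; split.
- by move=> j; apply: (window_s_bound eps_gt0 run T_ge2 le_lTJ window).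
- exact: (window_sum_ln_max_lt eps_gt0 run T_ge2 le_lTJ window).
- exact: (window_sum_ln_odds_le eps_gt0 run fs_min z0_sub T_ge2 le_lTJ).
- exact: (window_length_lt eps_gt0 run fs_min z0_sub T_ge2 le_lTJ window).
Qed.
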